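(* Fix $(\vartheta,\kappa)\in(0,1)^2$ with $\kappa>1-\vartheta$, $r>0$, $a\ge1$, an integer $m_0\ge1$ and $c_0>0$; let $g=g(m_0,\vartheta,r)$. Consider $Y=X\beta+\sigma z$ with $\beta$ following ARW$(\vartheta,r,a,\mu)$ and $X$ following RD$(\vartheta,\kappa,\Omega)$, with $\Omega\in\mathcal M_p(c_0,g)$ for sufficiently large $p$. For each $1\le j\le p$ let $(V_{0j}^*,V_{1j}^* )$ be the minimizing pair of $\eta(V_0,V_1)$ over $\{(V_0,V_1):j\in V_0\cup V_1\}$ (ties broken lexicographically). Then $\max_{1\le j\le p}|V_{0j}^*\cup V_{1j}^*|\le(\vartheta+r)^2/(2\vartheta r)$.
   Context: $Y=X\beta+\sigma z\in\mathbb R^n$, $X$ is $n\times p$, $z\sim N(0,I_n)$, $\sigma>0$ known. RD$(\vartheta,\kappa,\Omega)$: $n=p^\kappa$, rows of $X$ i.i.d. $N(0,\frac1n\Omega)$, $\Omega$ a correlation matrix. ARW$(\vartheta,r,a,\mu)$: $\epsilon_p=p^{-\vartheta}$, $\tau_p=\sigma\sqrt{2r\log p}$, $b$ i.i.d. Bernoulli$(\epsilon_p)$ independent of $(X,z)$, $\beta=b\circ\mu$, $\mu\in\Theta_p^*(\tau_p,a):=\{\mu:\tau_p\le|\mu_i|\le a\tau_p\ \forall i\}$. $\lambda_k^*(\Omega)$: minimal smallest eigenvalue of $k\times k$ principal submatrices; $g(m_0,\vartheta,r)$ is the smallest integer $\ge\max\{m_0,(\vartheta+r)^2/(2\vartheta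 r)\}$; $\mathcal M_p(c_0,g)$: correlation matrices with $\lambda_g^*(\Omega)\ge c_0$. For $V\subset\{1..p\}$ with indicator $I_V$, $B_V=\{I_V\circ\mu:\mu\in\Theta_p^*(\tau_p,a)\}$; $\alpha(\theta^{(0)},\theta^{(1)})=\tau_p^{-2}(\theta^{(0)}-\theta^{(1)})'\Omega(\theta^{(0)}-\theta^{(1)})$; $\alpha^*(V_0,V_1)=\min\{\alpha:\theta^{(i)}\in B_{V_i},\ \mathrm{sgn}(\theta^{(0)})\ne\mathrm{sgn}(\theta^{(1)})\}$; $\eta(V_0,V_1)=\max\{|V_0|,|V_1|\}\vartheta+\frac14[(\sqrt{\alpha^*r}-||V_1|-|V_0||\vartheta/\sqrt{\alpha^*r})_+]^2$ with $\alpha^*=\alpha^*(V_0,V_1)$ and $x_+=\max(x,0)$. *)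

From HB Require Import structures.
From mathcomp Require Import all_boot all_order all_algebra.
From mathcomp Require Import all_classical all_reals all_analysis.
Set Implicit Arguments. Unset Strict Implicit. Unset Printing Implicit Defensive.
Import Order.TTheory GRing.Theory Num.Theory.
Local Open Scope ring_scope.
Local Open Scope classical_set_scope.

Section UPS.
Variable R : realType.

Definition qform (p : nat) (Om : 'M[R]_p) (v : 'I_p -> R) : R :=
  \sum_(i < p) \sum_(k < p) v i * Om i k * v k.

Definition correlation_matrix (p : nat) (Om : 'M[R]_p) : Prop :=
  Om^T = Om /\ (forall v, 0 <= qform Om v) /\ (forall i, Om i i = 1).

Definition lambda_min (k : nat) (A : 'M[R]_k) : R := inf [set x | eigenvalue A x].

(* lambda_k^*(Om): minimal smallest eigenvalue over k x k principal submatrices;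
   a principal submatrix is indexed by an injective map 'I_k -> 'I_p *)
Definition lambda_star (p k : nat) (Om : 'M[R]_p) : R :=
  inf [set x | exists f : 'I_k -> 'I_p, injective f /\ x = lambda_min (mxsub f f Om)].

Definition g_of (m0 : nat) (th r : R) : nat :=
  maxn m0 `|Num.ceil ((th + r) ^+ 2 / (2 * th * r))|%N.

Definition Mp (p : nat) (c0 : R) (g : nat) (Om : 'M[R]_p) : Prop :=
  correlation_matrix Om /\ c0 <= lambda_star g Om.

Definition tau_p (sigma r : R) (p : nat) : R := sigma * Num.sqrt (2 * r * ln p%:R).

Definition Theta_star (p : nat) (tau a : R) (mu : 'I_p -> R) : Prop :=
  forall i, tau <= `|mu i| <= a * tau.

Definition B_V (p : nat) (tau a : R) (V : {set 'I_p}) (th : 'I_p -> R) : Prop :=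
  exists mu, Theta_star tau a mu /\ th = (fun i => if i \in V then mu i else 0).

Definition sgnv (p : nat) (th : 'I_p -> R) : 'I_p -> R := fun i => Num.sg (th i).

Definition alpha (p : nat) (Om : 'M[R]_p) (tau : R) (th0 th1 : 'I_p -> R) : R :=
  tau ^-2 * qform Om (fun i => th0 i - th1 i).

Definition alpha_star (p : nat) (Om : 'M[R]_p) (tau a : R) (V0 V1 : {set 'I_p}) : R :=
  inf [set x | exists th0 th1, B_V tau a V0 th0 /\ B_V tau a V1 th1 /\
                 sgnv th0 <> sgnv th1 /\ x = alpha Om tau th0 th1].

Definition eta_UPS (p : nat) (Om : 'M[R]_p) (tau a th r : R) (V0 V1 : {set 'I_p}) : R :=
  let al := alpha_star Om tau a V0 V1 in
  (maxn #|V0| #|V1|)%:R * th +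
  4^-1 * (Num.max (Num.sqrt (al * r)
                   - `|(#|V1|%:R - #|V0|%:R : R)| * th / Num.sqrt (al * r)) 0) ^+ 2.

End UPS.

From HB Require Import structures.
From mathcomp Require Import all_boot all_order all_algebra.
From mathcomp Require Import all_classical all_reals all_analysis.
From mathcomp Require Import ring lra.
Import Order.TTheory GRing.Theory Num.Theory.
Local Open Scope ring_scope.

(* Compare the minimizer with the competitor pair (empty set, {j}).
   Its separation alpha* is at most Omega_jj = 1 (take theta0 = 0 and theta1 = tau e_j),
   and with s := sqrt(alpha* r) <= sqrt r its eta is th + (s - th/s)_+^2/4 <= (th + r)^2/(4r).
   On the other hand eta(V0, V1) >= th max(|V0|, |V1|) >= th |V0 :|: V1| / 2. *)

Section SingletonCompetitor.
Variable R : realType.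

Lemma qform_delta (p : nat) (Om : 'M[R]_p) (j : 'I_p) (c : R) :
  qform Om (fun i => if i == j then c else 0) = c * Om j j * c.
Proof.
rewrite /qform (bigD1 j) //= [X in _ + X]big1; last first.
  by move=> i /negbTE ->; rewrite big1 // => k _; rewrite !mul0r.
rewrite addr0 (bigD1 j) //= [X in _ + X]big1 ?addr0 ?eqxx // => k /negbTE ->.
by rewrite mulr0.
Qed.

Lemma alpha_star_set0_set1 (p : nat) (Om : 'M[R]_p) (tau a : R) (j : 'I_p) :
  0 < tau -> 1 <= a -> (forall v, 0 <= qform Om v) ->
  alpha_star Om tau a finset.set0 [set j] <= Om j j.
Proof.
move=> tau_gt0 a_ge1 Om_psd; apply: ge_inf.
  exists 0 => _ [th0 [th1 [_ [_ [_ ->]]]]].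
  by rewrite /alpha mulr_ge0 // invr_ge0 exprn_ge0 // ltW.
have tau_Theta : Theta_star tau a (fun _ : 'I_p => tau).
  move=> i; rewrite gtr0_norm // lexx /=.
  by rewrite -[X in X <= _]mul1r ler_wpM2r // ltW.
exists (fun _ => 0), (fun i => if i \in [set j] then tau else 0).
split; first by exists (fun _ => tau); split=> //; apply: funext => i; rewrite finset.in_set0.
split; first by exists (fun _ => tau).
split.
  move/(congr1 (fun f => f j)); rewrite /sgnv finset.in_set1 eqxx sgr0 gtr0_sg //.
  by move/eqP; rewrite eq_sym oner_eq0.
rewrite /alpha.
have -> : (fun i => 0 - (if i \in [set j] then tau else 0)) =
          (fun i => if i == j then - tau else 0).
  by apply: funext => i; rewrite finset.in_set1; case: (i == j); rewrite sub0r ?oppr0.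
rewrite qform_delta mulrN mulNr mulNr opprK mulrAC -expr2 mulrA mulVf ?mul1r //.
by rewrite expf_neq0 // gt_eqF.
Qed.

Lemma eta_UPS_set0_set1 (p : nat) (Om : 'M[R]_p) (tau a th r : R) (j : 'I_p) :
  let s := Num.sqrt (alpha_star Om tau a finset.set0 [set j] * r) in
  eta_UPS Om tau a th r finset.set0 [set j] = th + 4^-1 * (Num.max (s - th / s) 0) ^+ 2.
Proof. by rewrite /eta_UPS finset.cards0 finset.cards1 subr0 normr1 !mul1r. Qed.

Lemma eta_UPS_ge_card (p : nat) (Om : 'M[R]_p) (tau a th r : R) (V0 V1 : {set 'I_p}) :
  (maxn #|V0| #|V1|)%:R * th <= eta_UPS Om tau a th r V0 V1.
Proof. by rewrite /eta_UPS lerDl mulr_ge0 ?invr_ge0 ?sqr_ge0. Qed.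

(* With y := th/s < s the claim becomes (r - s^2)(r - y^2) >= 0. *)
Lemma singleton_eta_bound (th r s : R) : 0 < th -> 0 < r -> 0 <= s -> s ^+ 2 <= r ->
  th + 4^-1 * (Num.max (s - th / s) 0) ^+ 2 <= (th + r) ^+ 2 / (4 * r).
Proof.
move=> th_gt0 r_gt0 s_ge0 s2_le_r.
rewrite ler_pdivlMr ?mulr_gt0 //.
have [gap_le0 | gap_gt0] := lerP (s - th / s) 0.
  by rewrite expr0n /= mulr0 addr0; have := sqr_ge0 (th - r); nra.
have s_gt0 : 0 < s.
  rewrite lt_neqAle s_ge0 andbT; apply/negP => /eqP s0.
  by move: gap_gt0; rewrite -s0 invr0 mulr0 subrr ltxx.
set y := th / s.
have th_ys : th = y * s by rewrite /y mulfVK ?gt_eqF.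
have y_ge0 : 0 <= y by rewrite /y divr_ge0 ?ltW.
have y2_le_s2 : y ^+ 2 <= s ^+ 2.
  by rewrite ler_sqr ?nnegrE //; move: gap_gt0; rewrite subr_gt0 => /ltW.
rewrite th_ys -subr_ge0.
have -> : (y * s + r) ^+ 2 - (y * s + 4^-1 * (s - y) ^+ 2) * (4 * r) =
          (r - s ^+ 2) * (r - y ^+ 2) by field.
by apply: mulr_ge0; lra.
Qed.

Lemma eta_UPS_set0_set1_le (p : nat) (Om : 'M[R]_p) (tau a th r : R) (j : 'I_p) :
  0 < tau -> 1 <= a -> 0 < th -> 0 < r -> correlation_matrix Om ->
  eta_UPS Om tau a th r finset.set0 [set j] <= (th + r) ^+ 2 / (4 * r).
Proof.
move=> tau_gt0 a_ge1 th_gt0 r_gt0 [_ [Om_psd Om_diag]].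
have al_le1 : alpha_star Om tau a finset.set0 [set j] <= 1.
  by rewrite -(Om_diag j); exact: alpha_star_set0_set1.
rewrite eta_UPS_set0_set1; apply: singleton_eta_bound; rewrite ?sqrtr_ge0 //.
have [al_r_ge0 | al_r_lt0] := lerP 0 (alpha_star Om tau a finset.set0 [set j] * r).
  by rewrite sqr_sqrtr //; nra.
by rewrite ltr0_sqrtr // expr0n /= ltW.
Qed.

Lemma tau_p_gt0 (sigma r : R) (p : nat) : 0 < sigma -> 0 < r -> (2 <= p)%N ->
  0 < tau_p sigma r p.
Proof.
move=> sigma_gt0 r_gt0 p_ge2.
by rewrite /tau_p mulr_gt0 // sqrtr_gt0 !mulr_gt0 // ln_gt0 // ltr1n.
Qed.

End SingletonCompetitor.

Lemma card_setU_le_double_max (T : finType) (A B : {set T}) :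
  (#|A :|: B| <= 2 * maxn #|A| #|B|)%N.
Proof.
apply: leq_trans (finset.leq_card_setU _ _) _.
by rewrite mul2n -addnn leq_add ?leq_maxl ?leq_maxr.
Qed.

Theorem lemma22 (R : realType) (th kap r a sigma c0 : R) (m0 : nat) :
  0 < th < 1 -> 0 < kap < 1 -> 1 - th < kap -> 0 < r -> 1 <= a ->
  (1 <= m0)%N -> 0 < c0 -> 0 < sigma ->
  exists p0 : nat, forall (p : nat) (Om : 'M[R]_p),
    (p0 <= p)%N -> Mp c0 (g_of m0 th r) Om ->
    forall (j : 'I_p) (V0 V1 : {set 'I_p}),
      j \in V0 :|: V1 ->
      (forall W0 W1 : {set 'I_p}, j \in W0 :|: W1 ->
         eta_UPS Om (tau_p sigma r p) a th r V0 V1 <= eta_UPS Om (tau_p sigma r p) a th r W0 W1) ->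
      (#|V0 :|: V1|%:R <= (th + r) ^+ 2 / (2 * th * r) :> R).
Proof.
move=> /andP[th_gt0 _] _ _ r_gt0 a_ge1 _ _ sigma_gt0.
exists 2%N => p Om p_ge2 [Om_corr _] j V0 V1 _ V_min.
set tau := tau_p sigma r p.
have tau_gt0 : 0 < tau by exact: tau_p_gt0.
have V_le_single := V_min finset.set0 [set j]; rewrite finset.set0U finset.set11 in V_le_single.
have eta_V_le : eta_UPS Om tau a th r V0 V1 <= (th + r) ^+ 2 / (4 * r).
  apply: le_trans (V_le_single isT) _.
  exact: eta_UPS_set0_set1_le.
have max_le : (maxn #|V0| #|V1|)%:R * th <= (th + r) ^+ 2 / (4 * r).
  by apply: le_trans eta_V_le; exact: eta_UPS_ge_card.
rewrite -(ler_pM2r th_gt0).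
apply: le_trans (_ : (2 * maxn #|V0| #|V1|)%:R * th <= _).
  by apply: ler_wpM2r; [exact: ltW | rewrite ler_nat card_setU_le_double_max].
have -> : (th + r) ^+ 2 / (2 * th * r) * th = 2 * ((th + r) ^+ 2 / (4 * r)).
  by field; rewrite !gt_eqF.
by rewrite natrM -mulrA ler_pM2l.
Qed.
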